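(* Let $T$ be dependent, $\kappa$ regular $>|T|$, $N\prec\mathfrak C$ $\kappa$-saturated and $q\in\mathbf S^{\mathrm{nsp},m}_{\ge\kappa}(N)$ for some $m<\omega$. Then for every $M\prec N$ with $\|M\|<\kappa$ and every formula $\varphi(\bar x,\bar y)$ with parameters from $N$, where $\ell g(\bar x)=m$ and $\bar y$ is finite, there are a formula $\psi(\bar x,\bar d)\in q$ and a function $\eta:{}^{\ell g(\bar y)}M\to\{0,1\}$ such that $$\psi(\bar x,\bar d)\vdash\{\varphi(\bar x,\bar b)^{\eta(\bar b)}:\bar b\in{}^{\ell g(\bar y)}M\}$$ (hence this set is included in $q$).
   Context: $T$ is a complete first-order theory, $\mathfrak C$ its monster model; types are computed in $\mathfrak C$. $T$ dependent means NIP. $\varphi^1=\varphi$, $\varphi^0=\neg\varphi$. A type $p$ does not split over $B$ if whenever $\varphi(\bar x,\bar b),\neg\varphi(\bar x,\bar c)\in p$ then $\mathrm{tp}(\bar b,B)\ne\mathrm{tp}(\bar c,B)$. Complete types $p(\bar x),q(\bar y)$ over $A$ are weakly orthogonal if for all $\bar a_1,\bar a_2$ realizing $p$ and $\bar b_1,\bar b_2$ realizing $q$, $\mathrm{tp}(\bar a_1{}^\frown\bar b_1,A)=\mathrm{tp}(\bar a_2{}^\frown\bar b_2,A)$. $\mathbf S^{\mathrm{nsp}}_{<\kappa}(A)$ is the set of complete types (in finitely many variables) over $A$ that do not split over some $B\subseteq A$ with $|B|<\kappa$; $\mathbf S^{\mathrm{nsp},m}_{\ge\kappa}(A)$ is the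 set of $p\in\mathbf S^m(A)$ weakly orthogonal to every $r\in\mathbf S^{\mathrm{nsp}}_{<\kappa}(A)$. *)

From mathcomp Require Import all_boot.

Set Implicit Arguments.
Unset Strict Implicit.
Unset Printing Implicit Defensive.

Record signature := Signature {
  fsym : Type; fary : fsym -> nat;
  rsym : Type; rary : rsym -> nat }.

Section Syntax.
Variables (L : signature) (P : Type).

Inductive term : Type :=
  | tvar of nat
  | tpar of P
  | tapp (f : fsym L) of ('I_(fary f) -> term).

(* formulas: =, relations, negation, conjunction, existential quantifier
   (binding de Bruijn variable 0) *)
Inductive formula : Type :=
  | feq of term & term
  | frel (r : rsym L) of ('I_(rary r) -> term)
  | fneg of formula
  | fand of formula & formula
  | fex of formula.

Fixpoint tbounded (n : nat) (t : term) : Prop :=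
  match t with
  | tvar i => i < n
  | tpar _ => True
  | tapp f args => forall i, tbounded n (args i)
  end.

Fixpoint bounded (n : nat) (phi : formula) : Prop :=
  match phi with
  | feq t u => tbounded n t /\ tbounded n u
  | frel r args => forall i, tbounded n (args i)
  | fneg f => bounded n f
  | fand f g => bounded n f /\ bounded n g
  | fex f => bounded n.+1 f
  end.

Fixpoint tparams_in (A : P -> Prop) (t : term) : Prop :=
  match t with
  | tvar _ => True
  | tpar a => A a
  | tapp f args => forall i, tparams_in A (args i)
  end.

Fixpoint params_in (A : P -> Prop) (phi : formula) : Prop :=
  match phi with
  | feq t u => tparams_in A t /\ tparams_in A u
  | frel r args => forall i, tparams_in A (args i)
  | fneg f => params_in A f
  | fand f g => params_in A f /\ params_in A g
  | fex f => params_in A f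
  end.

(* replace free variable j (i.e. index j + depth) by the parameter s j
   whenever s j = Some c; parameters are closed, so no shifting is needed *)
Fixpoint tinst (d : nat) (s : nat -> option P) (t : term) : term :=
  match t with
  | tvar i => if i < d then tvar i else
              match s (i - d) with Some c => tpar c | None => tvar i end
  | tpar a => tpar a
  | tapp f args => tapp (fun i => tinst d s (args i))
  end.

Fixpoint inst (d : nat) (s : nat -> option P) (phi : formula) : formula :=
  match phi with
  | feq t u => feq (tinst d s t) (tinst d s u)
  | frel r args => frel (fun i => tinst d s (args i))
  | fneg f => fneg (inst d s f)
  | fand f g => fand (inst d s f) (inst d s g)
  | fex f => fex (inst d.+1 s f)
  end.

(* phi(x_0..x_{m-1}, b) : the variables x_m, ..., x_{m+size b-1} are
   replaced by the parameters listed in b *)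
Definition inst_tail (m : nat) (b : seq P) (phi : formula) : formula :=
  inst 0 (fun n => if m <= n then onth b (n - m) else None) phi.

End Syntax.

Record structure (L : signature) := Structure {
  carrier :> Type;
  elt : carrier;                       (* structures are nonempty *)
  funs : forall f : fsym L, ('I_(fary f) -> carrier) -> carrier;
  rels : forall r : rsym L, ('I_(rary r) -> carrier) -> Prop }.

Section Semantics.
Variables (L : signature) (C : structure L).

Notation fm := (formula L (carrier C)).

Fixpoint eval (v : nat -> C) (t : term L C) : C :=
  match t with
  | tvar i => v i
  | tpar a => a
  | tapp f args => funs (fun i => eval v (args i))
  end.

Definition scons (a : C) (v : nat -> C) (n : nat) : C :=
  if n is j.+1 then v j else a.

Fixpoint sat (v : nat -> C) (phi : fm) : Prop :=
  match phi with
  | feq t u => eval v t = eval v u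
  | frel r args => rels (fun i => eval v (args i))
  | fneg f => ~ sat v f
  | fand f g => sat v f /\ sat v g
  | fex f => exists a, sat (scons a v) f
  end.

Definition satT (phi : fm) (s : seq C) : Prop := sat (fun n => nth (elt C) s n) phi.

Definition tuple_in (A : C -> Prop) (s : seq C) : Prop :=
  forall i, i < size s -> A (nth (elt C) s i).

Definition subset (A B : C -> Prop) : Prop := forall x, A x -> B x.

Definition no_params (phi : fm) : Prop := params_in (fun _ : C => False) phi.

Definition type_of (A : C -> Prop) (a : seq C) (phi : fm) : Prop :=
  params_in A phi /\ bounded (size a) phi /\ satT phi a.

Definition realizes (A : C -> Prop) (p : fm -> Prop) (a : seq C) : Prop :=
  forall phi, p phi <-> type_of A a phi.

(* p \in S^m(A): types are computed in the monster C *)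
Definition isType (A : C -> Prop) (m : nat) (p : fm -> Prop) : Prop :=
  exists a, size a = m /\ realizes A p a.

Definition eqtp (B : C -> Prop) (b c : seq C) : Prop :=
  size b = size c /\
  forall phi, params_in B phi -> bounded (size b) phi -> (satT phi b <-> satT phi c).

Definition nsplit (A : C -> Prop) (m : nat) (p : fm -> Prop) (B : C -> Prop) : Prop :=
  forall (k : nat) (phi : fm) (b c : seq C),
    no_params phi -> bounded (m + k) phi ->
    size b = k -> size c = k -> tuple_in A b -> tuple_in A c ->
    p (inst_tail m b phi) -> p (fneg (inst_tail m c phi)) ->
    ~ eqtp B b c.

Definition weakly_orth (A : C -> Prop) (p r : fm -> Prop) : Prop :=
  forall a1 a2 b1 b2, realizes A p a1 -> realizes A p a2 ->
    realizes A r b1 -> realizes A r b2 -> eqtp A (a1 ++ b1) (a2 ++ b2).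

Definition card_lt (X Y : Type) : Prop :=
  (exists f : X -> Y, injective f) /\ ~ (exists g : Y -> X, injective g).

Definition set_card_lt (A : C -> Prop) (K : Type) : Prop := card_lt {x : C | A x} K.

Definition S_nsp_lt (A : C -> Prop) (K : Type) (r : fm -> Prop) : Prop :=
  exists m, isType A m r /\
    exists B : C -> Prop, subset B A /\ set_card_lt B K /\ nsplit A m r B.

Definition S_nsp_ge (A : C -> Prop) (K : Type) (m : nat) (q : fm -> Prop) : Prop :=
  isType A m q /\ forall r, S_nsp_lt A K r -> weakly_orth A q r.

(* M is (the universe of) an elementary substructure of C
   (Tarski--Vaught test) *)
Definition elementary (M : C -> Prop) : Prop :=
  forall phi : fm, params_in M phi -> bounded 1 phi ->
    (exists a, satT phi [:: a]) -> exists a, M a /\ satT phi [:: a].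

Definition elem_sub (M N : C -> Prop) : Prop := subset M N /\ elementary M.

Definition fin_sat (Sigma : fm -> Prop) : Prop :=
  forall l : seq fm, (forall i, i < size l -> forall d, Sigma (nth d l i)) ->
    exists a, forall i, i < size l -> forall d, satT (nth d l i) [:: a].

Definition saturated_in (D : C -> Prop) (K : Type) : Prop :=
  forall A : C -> Prop, subset A D -> set_card_lt A K ->
  forall Sigma : fm -> Prop,
    (forall phi, Sigma phi -> params_in A phi /\ bounded 1 phi) ->
    fin_sat Sigma -> exists a, D a /\ forall phi, Sigma phi -> satT phi [:: a].

Definition dependent : Prop :=
  forall (phi : fm) (m k : nat), no_params phi -> bounded (m + k) phi ->
    exists n : nat, ~ exists (a : nat -> seq C) (b : (nat -> bool) -> seq C),
      (forall i, size (a i) = m) /\ (forall s, size (b s) = k) /\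
      forall (s : nat -> bool) (i : nat), i < n ->
        (satT phi (a i ++ b s) <-> s i).

End Semantics.

Definition infinite_type (K : Type) : Prop := exists f : nat -> K, injective f.

Definition regular (K : Type) : Prop :=
  infinite_type K /\
  forall (I : Type) (F : I -> K -> Prop),
    card_lt I K -> (forall i, card_lt {x : K | F i x} K) ->
    exists x : K, forall i, ~ F i x.

(* |T| = number of L-formulas *)
Definition card_T (L : signature) : Type := formula L Empty_set.

(* Let a realize q. If no psi in q forces phi(x, b) to agree with phi(a, b) for all b from M,
   then for every psi in q some b from M satisfies "psi(x) does not decide phi(x, b)". These
   conditions form a directed family of formulas over N each satisfiable in M, so the monster
   realizes all of them by one tuple b whose type over N is finitely satisfiable in M. Such a
   type does not split over M, and |M| < kappa, so tp(b/N) is in S^nsp_{<kappa}(N). As no formula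
   of q decides phi(x, b), both q + phi(x, b) and q + ~phi(x, b) are realized, say by a1 and a2,
   and tp(a1 b/N) <> tp(a2 b/N) contradicts the weak orthogonality of q to tp(b/N). *)

From Pilot Require Import Defs.
From mathcomp Require Import all_boot zify.
From Stdlib Require Import Classical ClassicalEpsilon FunctionalExtensionality.
From Stdlib Require Import ProofIrrelevance Lia.

Set Implicit Arguments.
Unset Strict Implicit.
Unset Printing Implicit Defensive.

Section Syntax.
Variables (L : signature) (P : Type).
Implicit Types (A B : P -> Prop) (t : term L P) (phi psi : formula L P).

Lemma tbounded_mono n n' t : n <= n' -> tbounded n t -> tbounded n' t.
Proof.
elim: t n n' => [i|a|f args IH] n n' hn /=; [lia|done|move=> h i; exact: (IH i n)].
Qed.

Lemma bounded_mono n n' phi : n <= n' -> bounded n phi -> bounded n' phi.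
Proof.
elim: phi n n' => [t u|r args|f IH|f IHf g IHg|f IH] n n' hn /=.
- by case=> ??; split; apply: (tbounded_mono hn).
- by move=> h i; apply: (tbounded_mono hn).
- exact: IH.
- by case=> ??; split; [apply: (IHf n)|apply: (IHg n)].
- exact: IH.
Qed.

Lemma tparams_in_mono A B t : (forall x, A x -> B x) -> tparams_in A t -> tparams_in B t.
Proof. by move=> hAB; elim: t => [i|a|f args IH] /=; [|exact: hAB|move=> h i; exact: IH]. Qed.

Lemma params_in_mono A B phi :
  (forall x, A x -> B x) -> params_in A phi -> params_in B phi.
Proof.
move=> hAB; elim: phi => [t u|r args|f IH|f IHf g IHg|f IH] /=.
- by case=> ??; split; apply: tparams_in_mono hAB _.
- by move=> h i; apply: tparams_in_mono hAB _.
- exact: IH.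
- by case=> ??; split; [apply: IHf|apply: IHg].
- exact: IH.
Qed.

(* [inst_tail m b] unfolds to [inst 0 (tail_subst m b)]. *)
Definition tail_subst m (b : seq P) (n : nat) : option P :=
  if m <= n then onth b (n - m) else None.

Lemma tbounded_tinst_tail m b d t :
  tbounded (d + (m + size b)) t -> tbounded (d + m) (tinst d (tail_subst m b) t).
Proof.
rewrite /tail_subst; elim: t => [i|a|f args IH] //= => [hi|h i]; last exact: IH.
case: ltnP => hid /=; first by rewrite ltn_addr.
case: leqP => hm /=; last lia.
have := onthTE b (i - d - m); case: onth => //= /esym/negbT; rewrite -leqNgt; lia.
Qed.

Lemma bounded_inst_tail_subst m b phi d :
  bounded (d + (m + size b)) phi -> bounded (d + m) (inst d (tail_subst m b) phi).
Proof.
elim: phi d => [t u|r args|f IH|f IHf g IHg|f IH] d /=.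
- by case=> ??; split; apply: tbounded_tinst_tail.
- by move=> h i; apply: tbounded_tinst_tail.
- exact: IH.
- by case=> ??; split; [apply: IHf|apply: IHg].
- exact: (IH d.+1).
Qed.

Lemma bounded_inst_tail m b phi :
  bounded (m + size b) phi -> bounded m (inst_tail m b phi).
Proof. exact: (bounded_inst_tail_subst (d := 0)). Qed.

Lemma params_in_inst A (s : nat -> option P) phi d :
  (forall n c, s n = Some c -> A c) -> params_in A phi -> params_in A (inst d s phi).
Proof.
move=> hs.
have ht e t : tparams_in A t -> tparams_in A (tinst e s t).
  elim: t => [i|a|f args IH] //= => [_|h i]; last exact: IH.
  by case: (i < e) => //; case E: (s (i - e)) => [c|] //=; exact: hs E.
elim: phi d => [t u|r args|f IH|f IHf g IHg|f IH] d /=.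
- by case=> ??; split; apply: ht.
- by move=> h i; apply: ht.
- exact: IH.
- by case=> ??; split; [apply: IHf|apply: IHg].
- exact: IH.
Qed.

Lemma params_in_inst_tail A m b phi :
  params_in A phi -> (forall x, List.In x b -> A x) -> params_in A (inst_tail m b phi).
Proof.
move=> hp hb; apply: params_in_inst => // n c.
case: (m <= n) => //; elim: b hb (n - m) => [|x b IH] hb [|j] //=.
- by case=> <-; apply: hb; left.
- by apply: IH => y hy; apply: hb; right.
Qed.

Fixpoint fexn (n : nat) phi : formula L P :=
  if n is n'.+1 then fex (fexn n' phi) else phi.

Lemma bounded_fexn n phi j : bounded (n + j) phi -> bounded j (fexn n phi).
Proof. by elim: n j => [|n IH] j //= h; apply: IH; rewrite addnS -addSn. Qed.

Lemma params_in_fexn A n phi : params_in A phi -> params_in A (fexn n phi).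
Proof. by elim: n. Qed.

Fixpoint fand_eqs (i : nat) (s : seq P) phi : formula L P :=
  if s is c :: s' then fand (feq (tvar L P i) (tpar L c)) (fand_eqs i.+1 s' phi) else phi.

Definition inst_head (s : seq P) phi : formula L P := fexn (size s) (fand_eqs 0 s phi).

Lemma bounded_inst_head s phi n : bounded (size s + n) phi -> bounded n (inst_head s phi).
Proof.
have eqs_bounded i n0 : i + size s <= n0 -> bounded n0 phi -> bounded n0 (fand_eqs i s phi).
  elim: s i => [|c s IH] i //= hi hp; split; [split=> /=; lia|apply: IH => //; lia].
by move=> hb; apply: bounded_fexn; apply: eqs_bounded hb; rewrite add0n leq_addr.
Qed.

Lemma params_in_inst_head A s phi :
  (forall x, List.In x s -> A x) -> params_in A phi -> params_in A (inst_head s phi).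
Proof.
move=> hs hp; apply: params_in_fexn.
elim: s 0 hs => [|c s IH] i //= hs; split; first by split=> //; apply: hs; left.
by apply: IH => x hx; apply: hs; right.
Qed.

Definition undecided (m : nat) (psi phi : formula L P) : formula L P :=
  fand (fexn m (fand psi phi)) (fexn m (fand psi (fneg phi))).

(* Closed, hence bounded by 0: it belongs to every complete type, even in 0 variables. *)
Definition ftrue : formula L P := fex (feq (tvar L P 0) (tvar L P 0)).

End Syntax.

Section Semantics.
Variables (L : signature) (C : structure L).
Implicit Types (phi psi : formula L C) (v : nat -> C) (a b w : seq C).

Definition inst_env d (s : nat -> option C) v (i : nat) : C :=
  if i < d then v i else odflt (v i) (s (i - d)).

Lemma eval_tinst d s v (t : term L C) : eval v (tinst d s t) = eval (inst_env d s v) t.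
Proof.
elim: t => [i|a|f args IH] //=; last by congr funs; apply: functional_extensionality.
by rewrite /inst_env; case: (i < d) => //; case: (s (i - d)).
Qed.

Lemma inst_env_scons d s v (c : C) :
  inst_env d.+1 s (scons c v) = scons c (inst_env d s v).
Proof. by apply: functional_extensionality => -[|j]; rewrite /inst_env //= ltnS subSS. Qed.

Lemma sat_inst phi d s v : sat v (inst d s phi) <-> sat (inst_env d s v) phi.
Proof.
elim: phi d v => [t u|r args|f IH|f IHf g IHg|f IH] d v /=.
- by rewrite !eval_tinst.
- by under [X in rels X]functional_extensionality => i do rewrite eval_tinst.
- by rewrite IH.
- by rewrite IHf IHg.
- by split=> -[c hc]; exists c; move: hc; rewrite IH inst_env_scons.
Qed.

Lemma eval_ext n (t : term L C) (v w : nat -> C) :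
  tbounded n t -> (forall i, i < n -> v i = w i) -> eval v t = eval w t.
Proof.
elim: t => [i|a|f args IH] //= hb hvw; first exact: hvw.
by congr funs; apply: functional_extensionality => i; exact: IH.
Qed.

Lemma sat_ext n phi (v w : nat -> C) :
  bounded n phi -> (forall i, i < n -> v i = w i) -> (sat v phi <-> sat w phi).
Proof.
elim: phi n v w => [t u|r args|f IH|f IHf g IHg|f IH] n v w /= hb hvw.
- by case: hb => h1 h2; rewrite (eval_ext h1 hvw) (eval_ext h2 hvw).
- by under [X in rels X]functional_extensionality => i do rewrite (eval_ext (hb i) hvw).
- by rewrite (IH n v w hb hvw).
- by case: hb => h1 h2; rewrite (IHf n v w h1 hvw) (IHg n v w h2 hvw).
- have hsc c i : i < n.+1 -> scons c v i = scons c w i by case: i => //= i; exact: hvw.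
  by split=> -[c hc]; exists c; move: hc; rewrite (IH _ _ _ hb (hsc c)).
Qed.

Lemma satT_prefix psi a b : bounded (size a) psi -> (satT psi (a ++ b) <-> satT psi a).
Proof. by move=> hb; apply: (sat_ext hb) => i hi; rewrite nth_cat hi. Qed.

Lemma satT_inst_tail m b a phi :
  size a = m -> (satT (inst_tail m b phi) a <-> satT phi (a ++ b)).
Proof.
move=> ha; rewrite /satT /inst_tail sat_inst.
suff -> : inst_env 0 (tail_subst m b) (nth (elt C) a) = nth (elt C) (a ++ b) by [].
apply: functional_extensionality => i.
rewrite /inst_env /= subn0 nth_cat ha /tail_subst.
case: (ltnP i m) => // hi.
by rewrite nth_default ?ha // odflt_onth.
Qed.

Lemma satT_fex phi s : satT (fex phi) s <-> exists c, satT phi (c :: s).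
Proof.
have E c : scons c (nth (elt C) s) = nth (elt C) (c :: s).
  by apply: functional_extensionality => -[].
by rewrite /satT /=; split=> -[c h]; exists c; move: h; rewrite E.
Qed.

Lemma satT_fexn n phi s :
  satT (fexn n phi) s <-> exists w : seq C, size w = n /\ satT phi (w ++ s).
Proof.
elim: n s => [|n IH] s /=.
  split=> [h|]; first by exists [::].
  by case=> -[|x w] [].
rewrite satT_fex; split.
- case=> c /IH [w [hw h]].
  by exists (rcons w c); rewrite size_rcons hw cat_rcons.
- case=> w'; case/lastP: w' => [[]//|w c]; rewrite size_rcons cat_rcons => -[[hw] h].
  by exists c; apply/IH; exists w.
Qed.

Lemma sat_fand_eqs i s psi v :
  sat v (fand_eqs i s psi) <->
  (forall j, j < size s -> v (i + j) = nth (elt C) s j) /\ sat v psi.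
Proof.
elim: s i => [|c s IH] i /=; first by split=> [|[]].
rewrite IH; split.
- case=> e [h1 h2]; split=> // -[|j] hj /=; first by rewrite addn0.
  by rewrite addnS -addSn h1.
- case=> h1 h2; split; first by move: (h1 0 erefl); rewrite addn0.
  by split=> // j hj; rewrite addSn -addnS h1.
Qed.

Lemma satT_inst_head s b psi : satT (inst_head s psi) b <-> satT psi (s ++ b).
Proof.
rewrite satT_fexn; split.
- case=> w [hw]; rewrite /satT sat_fand_eqs => -[heq h].
  suff -> : s = w by [].
  apply: (@eq_from_nth _ (elt C)) => [|j hj]; first by rewrite hw.
  by rewrite -heq // nth_cat hw hj.
- move=> h; exists s; split=> //; rewrite /satT sat_fand_eqs; split=> // j hj.
  by rewrite nth_cat hj.
Qed.

Lemma satT_ftrue s : satT (ftrue L C) s.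
Proof. by exists (elt C). Qed.

Lemma satT_undecided m psi phi b : bounded m psi ->
  satT (undecided m psi phi) b <->
  (exists w, size w = m /\ satT psi w /\ satT phi (w ++ b)) /\
  (exists w, size w = m /\ satT psi w /\ ~ satT phi (w ++ b)).
Proof.
move=> hb; have hpsi w : size w = m -> (satT psi (w ++ b) <-> satT psi w).
  by move=> hw; apply: satT_prefix; rewrite hw.
rewrite /undecided; change (satT (fand ?x ?y) b) with (satT x b /\ satT y b).
rewrite !satT_fexn.
by split=> -[[w1 [hw1 [h1 h1']]] [w2 [hw2 [h2 h2']]]];
  split; [exists w1|exists w2|exists w1|exists w2]; do 2 (split=> //); apply/hpsi.
Qed.

Lemma satT_undecided_fand m psi1 psi2 phi b : bounded m psi1 -> bounded m psi2 ->
  satT (undecided m (fand psi1 psi2) phi) b ->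
  satT (undecided m psi1 phi) b /\ satT (undecided m psi2 phi) b.
Proof.
move=> hb1 hb2 /satT_undecided -/(_ (conj hb1 hb2)).
case=> -[w1 [hw1 [[h11 h12] h1']]] [w2 [hw2 [[h21 h22] h2']]].
by split; apply/satT_undecided => //; split; [exists w1|exists w2|exists w1|exists w2].
Qed.

Lemma satT_undecided_disagree m psi phi w1 w2 b : bounded m psi ->
  size w1 = m -> size w2 = m -> satT psi w1 -> satT psi w2 ->
  ~ (satT phi (w1 ++ b) <-> satT phi (w2 ++ b)) -> satT (undecided m psi phi) b.
Proof.
move=> hb hw1 hw2 h1 h2 hne; apply/satT_undecided => //.
case: (classic (satT phi (w1 ++ b))) => hphi.
- split; first by exists w1.
  by exists w2; split=> //; split=> // ?; apply: hne; split.
- split; last by exists w1.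
  by exists w2; split=> //; split=> //; apply: NNPP => ?; apply: hne; split.
Qed.

Definition fand_closed (S : formula L C -> Prop) : Prop :=
  forall phi psi, S phi -> S psi -> S (fand phi psi).

Lemma fin_sat_fand_closed (S : formula L C -> Prop) :
  fand_closed S -> (forall phi, S phi -> exists c, satT phi [:: c]) -> fin_sat S.
Proof.
move=> hcl hS l hl.
have [->|[chi [hchi himp]]] : l = [::] \/ exists chi, S chi /\ forall c, satT chi [:: c] ->
    forall i, i < size l -> forall d, satT (nth d l i) [:: c].
- elim: l hl => [|phi l IH] hl; [by left|right].
  have hphi : S phi by exact: (hl 0).
  case: IH => [i hi|->|[chi [hchi himp]]]; first exact: (hl i.+1).
  + by exists phi; split=> // c hc [|i].
  + by exists (fand phi chi); split; [exact: hcl|move=> c [h1 h2] [|i] //= /himp; apply].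
- by exists (elt C).
- by have [c hc] := hS _ hchi; exists c; apply: himp.
Qed.

Lemma realizes_of_sat A p a a' : realizes A p a -> size a' = size a ->
  (forall psi, p psi -> satT psi a') -> realizes A p a'.
Proof.
move=> hp ha' hsat psi; rewrite /type_of ha'; split=> [hpsi|[hA [hb h]]].
  by have [? [? _]] := (hp psi).1 hpsi; split; [|split=> //; exact: hsat].
apply: NNPP => hn; suff /hsat : p (fneg psi) by [].
by apply/hp; split=> //; split=> // ha; apply: hn; apply/hp.
Qed.

Lemma tuple_in_In (A : C -> Prop) b : tuple_in A b -> forall x, List.In x b -> A x.
Proof.
elim: b => [|y b IH] hb x //= [<-|hx]; first exact: (hb 0).
by apply: IH => // i hi; exact: (hb i.+1).
Qed.

End Semantics.

Lemma In_nth_ex (T : Type) (x0 : T) (s : seq T) y :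
  List.In y s -> exists j, nth x0 s j = y.
Proof.
elim: s => [|x s IH] //= [<-|/IH [j hj]]; [by exists 0|by exists j.+1].
Qed.

Lemma sval_inj (T : Type) (P : T -> Prop) : injective (@proj1_sig T P).
Proof. exact: eq_sig_hprop (fun x => @proof_irrelevance (P x)). Qed.

(* The monster is saturated over sets smaller than Lam, where |N| < Lam; the parameter sets
   arising below are N plus finitely many points. *)
Definition almost_within (L : signature) (C : structure L) (A N : C -> Prop) : Prop :=
  exists F : seq C, forall x, A x -> N x \/ List.In x F.

Section Cardinality.
Variables (L : signature) (C : structure L) (N : C -> Prop).
Hypothesis hN : elementary N.

Definition fnot_in (l : seq C) : formula L C :=
  foldr (fun p f => fand (fneg (feq (tvar L C 0) (tpar L p))) f) (ftrue L C) l.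

Lemma satT_fnot_in l c : satT (fnot_in l) [:: c] <-> forall p, List.In p l -> c <> p.
Proof.
elim: l => [|p l IH] /=; first by split=> // _; exact: satT_ftrue.
change (satT (fand ?x ?y) ?s) with (satT x s /\ satT y s); rewrite IH.
split.
- by case=> hp hl p' [<-|/hl].
- by move=> h; split=> [|p' hp']; apply: h; [left|right].
Qed.

Lemma elementary_fresh l :
  ~ (forall x, N x) -> (forall x, List.In x l -> N x) -> exists a, N a /\ ~ List.In a l.
Proof.
move=> /not_all_ex_not [c hc] hl.
have hp : params_in N (fnot_in l).
  elim: l hl => [|p l IH] //= hl; split; first by split=> //; apply: hl; left.
  by apply: IH => x hx; apply: hl; right.
have hb : bounded 1 (fnot_in l) by elim: l {hl hp}.
have [|a [ha /satT_fnot_in hal]] := hN hp hb.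
  by exists c; apply/satT_fnot_in => p /hl hp' e; apply: hc; rewrite e.
by exists a; split=> // /hal.
Qed.

Lemma elementary_nat_inj :
  ~ (forall x, N x) -> exists g : nat -> C, (forall n, N (g n)) /\ injective g.
Proof.
move=> hNC.
have fresh l : exists a, (forall x, List.In x l -> N x) -> N a /\ ~ List.In a l.
  case: (classic (forall x, List.In x l -> N x)) => hl; last by exists (elt C).
  by have [a ha] := elementary_fresh hNC hl; exists a.
pose f l := proj1_sig (constructive_indefinite_description _ (fresh l)).
have hf l : (forall x, List.In x l -> N x) -> N (f l) /\ ~ List.In (f l) l.
  exact: proj2_sig (constructive_indefinite_description _ (fresh l)).
pose gl n := iter n (fun l => f l :: l) [::].
have hgl n x : List.In x (gl n) -> N x.
  by elim: n x => [|n IH] x //= [<-|/IH]; [exact: (hf _ IH).1|].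
have hgl_mono i j : i < j -> List.In (f (gl i)) (gl j).
  elim: j => [|j IH] //; rewrite ltnS leq_eqVlt => /orP[/eqP->|/IH h]; [by left|by right].
exists (fun n => f (gl n)); split; first by move=> n; exact: (hf _ (hgl n)).1.
move=> i j e.
wlog lt_ij : i j e / i < j.
  move=> wlog; case: (ltngtP i j) => // h; [exact: wlog|exact/esym/wlog].
by case: (hf _ (hgl j)) => _; rewrite -e; case; apply: hgl_mono.
Qed.

Lemma inj_union_finite (F : seq C) :
  exists h : {x | N x \/ List.In x F} -> {x | N x}, injective h.
Proof.
suff [H [HN Hinj]] : exists H : C -> C, (forall y, N y \/ List.In y F -> N (H y)) /\
    forall y1 y2, N y1 \/ List.In y1 F -> N y2 \/ List.In y2 F -> H y1 = H y2 -> y1 = y2.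
  exists (fun y => exist N (H (sval y)) (HN _ (svalP y))) => y1 y2 e.
  by apply: sval_inj; apply: (Hinj _ _ (svalP y1) (svalP y2)); exact: (f_equal sval e).
case: (classic (forall x, N x)) => [hall|hNC].
  by exists id; split=> // y _; exact: hall.
have [g [gN ginj]] := elementary_nat_inj hNC.
(* Hilbert's hotel: g j goes to g (2j), the j-th point of F to g (2j+1), the rest of N stays. *)
pose jg y := epsilon (inhabits 0) (fun j => y = g j).
pose jF y := epsilon (inhabits 0) (fun j => nth (elt C) F j = y).
pose H y := if excluded_middle_informative (exists j, y = g j) then g (jg y).*2
  else if excluded_middle_informative (N y) then y else g (jF y).*2.+1.
have H_cases y : N y \/ List.In y F ->
    [\/ exists j, y = g j /\ H y = g j.*2,
         (forall j, y <> g j) /\ N y /\ H y = y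
       | exists j, nth (elt C) F j = y /\ H y = g j.*2.+1].
  rewrite /H => hy; case: excluded_middle_informative => [hg|hg].
    by apply: Or31; exists (jg y); split=> //; exact: (epsilon_spec _ (fun j => y = g j) hg).
  case: excluded_middle_informative => [hNy|hNy].
    by apply: Or32; split=> // j e; apply: hg; exists j.
  apply: Or33; exists (jF y); split=> //; apply: (epsilon_spec _ (fun j => nth _ F j = y)).
  by case: hy => // /(In_nth_ex (elt C)).
exists H; split.
  by move=> y /H_cases [[j [_ ->]]|[_ [? ->]]|[j [_ ->]]].
move=> y1 y2 /H_cases h1 /H_cases h2.
case: h1 => [[j1 [-> ->]]|[hn1 [_ ->]]|[j1 [<- ->]]];
case: h2 => [[j2 [-> ->]]|[hn2 [_ ->]]|[j2 [<- ->]]] => E;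
  first [by case: (hn1 _ E) | by case: (hn2 _ (esym E)) | done | move/ginj: E => E].
- by congr g; lia.
- exfalso; lia.
- exfalso; lia.
- by congr nth; lia.
Qed.

Lemma set_card_lt_almost_within (Lam : Type) (A : C -> Prop) :
  set_card_lt N Lam -> almost_within A N -> set_card_lt A Lam.
Proof.
move=> [[f finj] hno] [F hA]; have [h hinj] := inj_union_finite F.
pose i (x : {x | A x}) := h (exist _ (sval x) (hA _ (svalP x))).
have iinj : injective i by move=> x y /hinj /(f_equal sval) /= /sval_inj.
split; first by exists (fun x => f (i x)) => x y /finj /iinj.
by case=> g ginj; apply: hno; exists (fun y => i (g y)) => x y /iinj /ginj.
Qed.

End Cardinality.

Section Coheir.
Variables (L : signature) (C : structure L) (M N : C -> Prop).

Definition finsat_in (b : seq C) : Prop :=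
  forall chi : formula L C, params_in N chi -> bounded (size b) chi -> satT chi b ->
    exists s, size s = size b /\ tuple_in M s /\ satT chi s.

Lemma finsat_in_nsplit b : finsat_in b -> nsplit N (size b) (type_of N b) M.
Proof.
move=> hfs k phi c1 c2 hphi hbd hc1 hc2 _ _ [hp1 [hb1 hs1]] [hp2 [hb2 hs2]] [_ heq].
have [s [hs [hsM [/(satT_inst_tail _ _ hs) hsc1 hsc2]]]] :=
  hfs (fand (inst_tail (size b) c1 phi) (fneg (inst_tail (size b) c2 phi)))
    (conj hp1 hp2) (conj hb1 hb2) (conj hs1 hs2).
apply: hsc2; apply/(satT_inst_tail _ _ hs); rewrite -satT_inst_head.
apply/heq; last by rewrite satT_inst_head.
- apply: params_in_inst_head; first exact: tuple_in_In hsM.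
  by apply: params_in_mono hphi.
- by apply: bounded_inst_head; rewrite hs hc1.
Qed.

Lemma finsat_in_S_nsp_lt (K : Type) b : Defs.subset M N -> set_card_lt M K -> finsat_in b ->
  S_nsp_lt N K (type_of N b).
Proof.
move=> hMN hMK hfs; exists (size b); split; first by exists b.
by exists M; split=> //; split=> //; exact: finsat_in_nsplit.
Qed.

End Coheir.

Section Realize.
Variables (L : signature) (C : structure L) (N : C -> Prop) (Lam : Type).
Hypotheses (hN : elementary N) (hNLam : set_card_lt N Lam)
  (hCsat : saturated_in (fun _ : C => True) Lam).
Implicit Types (A : C -> Prop) (S : formula L C -> Prop).

Lemma almost_within_add A c : almost_within A N -> almost_within (fun x => A x \/ x = c) N.
Proof.
case=> F hF; exists (c :: F) => x [/hF [h|h]|->]; [by left|by right; right|by right; left].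
Qed.

Lemma realize_type n A S : almost_within A N ->
  (forall phi, S phi -> params_in A phi /\ bounded n phi) -> fand_closed S ->
  (forall phi, S phi -> exists s, size s = n /\ satT phi s) ->
  exists s, size s = n /\ forall phi, S phi -> satT phi s.
Proof.
elim: n A S => [|n IH] A S hA hS hcl hsatS.
  by exists [::]; split=> // phi /hsatS [[|x s] [hs h]].
pose S1 chi := params_in A chi /\ bounded 1 chi /\
  exists psi, S psi /\ forall c, satT (fexn n psi) [:: c] -> satT chi [:: c].
have hS1 : fin_sat S1.
  apply: fin_sat_fand_closed.
  - move=> chi1 chi2 [p1 [b1 [psi1 [h1 i1]]]] [p2 [b2 [psi2 [h2 i2]]]].
    do 2 (split; first by split).
    exists (fand psi1 psi2); split; first exact: hcl.
    by move=> a /satT_fexn [w [hw [ha1 ha2]]]; split; [apply: i1|apply: i2];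
      apply/satT_fexn; exists w.
  - move=> chi [_ [_ [psi [hpsi himp]]]].
    have [s [hs h]] := hsatS _ hpsi; case/lastP: s hs h => [//|w a].
    rewrite size_rcons => -[hw] h; exists a; apply: himp; apply/satT_fexn.
    by exists w; rewrite cats1.
have [c [_ hc]] := hCsat (fun _ _ => I) (set_card_lt_almost_within hN hNLam hA)
  (Sigma := S1) (fun chi (h : S1 chi) => conj h.1 h.2.1) hS1.
have hfexn psi : S psi -> satT (fexn n psi) [:: c].
  move=> hpsi; have [hp hb] := hS _ hpsi; apply: hc.
  split; first exact: params_in_fexn.
  split; first by apply: bounded_fexn; rewrite addn1.
  by exists psi.
pose S' phi := exists psi, S psi /\ phi = inst_tail n [:: c] psi.
have [s [hs hS']] : exists s, size s = n /\ forall phi, S' phi -> satT phi s.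
  apply: (IH (fun x => A x \/ x = c)); first exact: almost_within_add.
  - move=> _ [psi [hpsi ->]]; have [hp hb] := hS _ hpsi; split.
    + apply: params_in_inst_tail; first by apply: params_in_mono hp => x; left.
      by move=> x [<-|//]; right.
    + by apply: bounded_inst_tail; rewrite /= addn1.
  - by move=> _ _ [p1 [h1 ->]] [p2 [h2 ->]]; exists (fand p1 p2); split=> //; exact: hcl.
  - move=> _ [psi [hpsi ->]]; have /satT_fexn [w [hw h]] := hfexn _ hpsi.
    by exists w; split=> //; apply/satT_inst_tail.
exists (s ++ [:: c]); split; first by rewrite size_cat hs addn1.
by move=> phi hphi; apply/(satT_inst_tail _ _ hs); apply: hS'; exists phi.
Qed.

Lemma realize_directed n A (D : seq C -> Prop) (Th : formula L C -> Prop) :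
  almost_within A N -> (forall th, Th th -> params_in A th /\ bounded n th) ->
  (exists th, Th th) ->
  (forall th1 th2, Th th1 -> Th th2 -> exists th, Th th /\
     forall s, size s = n -> D s -> satT th s -> satT th1 s /\ satT th2 s) ->
  (forall th, Th th -> exists s, size s = n /\ satT th s /\ D s) ->
  exists b, size b = n /\ forall zeta, params_in A zeta -> bounded n zeta ->
    (exists th, Th th /\ forall s, size s = n -> D s -> satT th s -> satT zeta s) ->
    satT zeta b.
Proof.
move=> hA hTh [th0 hth0] hdir hTsat.
pose Q zeta := params_in A zeta /\ bounded n zeta /\ exists th, Th th /\
  forall s, size s = n -> D s -> satT th s -> satT zeta s.
have [b [hb hQ]] : exists b, size b = n /\ forall zeta, Q zeta -> satT zeta b.
  apply: realize_type hA _ _ _.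
  - by move=> zeta [? [? _]].
  - move=> z1 z2 [p1 [b1 [th1 [h1 i1]]]] [p2 [b2 [th2 [h2 i2]]]].
    do 2 (split; first by split).
    have [th [hth hdir12]] := hdir _ _ h1 h2; exists th; split=> // s hs hsD /hdir12.
    by case=> // ??; split; [apply: i1|apply: i2].
  - move=> zeta [_ [_ [th [hth himp]]]]; have [s [hs [h hsD]]] := hTsat _ hth.
    by exists s; split=> //; apply: himp.
by exists b; split=> // zeta hp hbd hz; apply: hQ.
Qed.

Lemma realize_finsat_in (M : C -> Prop) k (Th : formula L C -> Prop) :
  (forall th, Th th -> params_in N th /\ bounded k th) -> (exists th, Th th) ->
  (forall th1 th2, Th th1 -> Th th2 -> exists th, Th th /\ forall s,
     size s = k -> tuple_in M s -> satT th s -> satT th1 s /\ satT th2 s) ->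
  (forall th, Th th -> exists s, size s = k /\ satT th s /\ tuple_in M s) ->
  exists b, size b = k /\ finsat_in M N b /\ forall th, Th th -> satT th b.
Proof.
move=> hTh hTh0 hdir hTsat.
have [|b [hb hQ]] := realize_directed (A := N) _ hTh hTh0 hdir hTsat.
  by exists [::]; left.
exists b; split=> //; split.
- move=> chi hp; rewrite hb => hbd hchi; apply: NNPP => hno.
  suff : satT (fneg chi) b by [].
  have [th0 hth0] := hTh0; apply: hQ => //; exists th0; split=> // s hs hsM _ hs'.
  by apply: hno; exists s; rewrite hs.
- move=> th hth; have [? ?] := hTh _ hth; apply: hQ => //.
  by exists th; split.
Qed.

End Realize.

Section Main.
Variables (L : signature) (C : structure L) (N : C -> Prop) (Lam K : Type).
Hypotheses (hN : elementary N) (hNLam : set_card_lt N Lam)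
  (hCsat : saturated_in (fun _ : C => True) Lam).
Variables (m : nat) (q : formula L C -> Prop) (a : seq C).
Hypotheses (ha : size a = m) (hqa : realizes N q a)
  (hq_orth : forall r, S_nsp_lt N K r -> weakly_orth N q r).

Lemma q_spec psi : q psi <-> params_in N psi /\ bounded m psi /\ satT psi a.
Proof. by rewrite hqa /type_of ha. Qed.

Lemma q_ftrue : q (ftrue L C).
Proof. by apply/q_spec; do 2 (split=> //); exact: satT_ftrue. Qed.

Lemma q_fand psi1 psi2 : q psi1 -> q psi2 -> q (fand psi1 psi2).
Proof.
by move=> /q_spec [p1 [b1 s1]] /q_spec [p2 [b2 s2]]; apply/q_spec.
Qed.

Lemma realize_q_and (F : seq C) (chi : formula L C) :
  params_in (fun x => N x \/ List.In x F) chi -> bounded m chi ->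
  (forall psi, q psi -> exists w, size w = m /\ satT psi w /\ satT chi w) ->
  exists a', size a' = m /\ realizes N q a' /\ satT chi a'.
Proof.
move=> hchiN hchib hcons.
have hA : almost_within (fun x => N x \/ List.In x F) N by exists F.
have hqN psi : q psi -> params_in (fun x => N x \/ List.In x F) psi /\ bounded m psi.
  by move=> /q_spec [hp [hb _]]; split=> //; apply: params_in_mono hp => x; left.
have hq_dir psi1 psi2 : q psi1 -> q psi2 -> exists psi, q psi /\ forall w,
    size w = m -> satT chi w -> satT psi w -> satT psi1 w /\ satT psi2 w.
  by move=> h1 h2; exists (fand psi1 psi2); split=> //; exact: q_fand.
have [a' [ha' hS]] := realize_directed hN hNLam hCsat hA hqN (ex_intro _ _ q_ftrue) hq_dir hcons.
exists a'; split=> //; split; last first.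
  by apply: hS => //; exists (ftrue L C); split=> //; exact: q_ftrue.
apply: (realizes_of_sat hqa); first by rewrite ha ha'.
move=> psi hpsi; have [hp [hb _]] := (q_spec psi).1 hpsi; apply: hS => //.
- by apply: params_in_mono hp => x; left.
- by exists psi.
Qed.

Variables (M : C -> Prop) (k : nat) (phi : formula L C).
Hypotheses (hMN : Defs.subset M N) (hMK : set_card_lt M K)
  (hphiN : params_in N phi) (hphib : bounded (m + k) phi).

Lemma q_literal (e : bool) b : size b = k -> tuple_in N b -> (e <-> satT phi (a ++ b)) ->
  q (if e then inst_tail m b phi else fneg (inst_tail m b phi)).
Proof.
move=> hb hbN he.
have hp : params_in N (inst_tail m b phi).
  by apply: params_in_inst_tail hphiN _; exact: tuple_in_In.
have hbd : bounded m (inst_tail m b phi) by apply: bounded_inst_tail; rewrite hb.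
apply/q_spec; case: e he => he; do 2 (split=> //).
- by apply/(satT_inst_tail _ _ ha); apply/he.
- by move/(satT_inst_tail _ _ ha)/he.
Qed.

Lemma no_finsat_undecided :
  ~ exists b, size b = k /\ finsat_in M N b /\ forall psi, q psi -> satT (undecided m psi phi) b.
Proof.
case=> b [hb [hfs hund]].
have hr := finsat_in_S_nsp_lt hMN hMK hfs.
have realize_phi (e : bool) : exists a', size a' = m /\ realizes N q a' /\
    satT (if e then inst_tail m b phi else fneg (inst_tail m b phi)) a'.
  have hp : params_in (fun x => N x \/ List.In x b) (inst_tail m b phi).
    by apply: params_in_inst_tail => [|x]; [apply: params_in_mono hphiN; left|right].
  have hbd : bounded m (inst_tail m b phi) by apply: bounded_inst_tail; rewrite hb.
  apply: (realize_q_and (F := b)); [by case: e|by case: e|].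
  move=> psi hpsi; have [_ [hpsib _]] := (q_spec psi).1 hpsi.
  have /(satT_undecided _ _ hpsib) [[w1 [hw1 [h1 h1']]] [w2 [hw2 [h2 h2']]]] := hund _ hpsi.
  case: e; [exists w1|exists w2]; do 2 (split=> //).
  - exact/(satT_inst_tail _ _ hw1).
  - by move/(satT_inst_tail _ _ hw2).
have [a1 [ha1 [hq1 /(satT_inst_tail _ _ ha1) h1]]] := realize_phi true.
have [a2 [ha2 [hq2 h2]]] := realize_phi false.
have [_ heq] := hq_orth hr hq1 hq2 (fun _ => iff_refl _) (fun _ => iff_refl _).
apply: h2; apply/(satT_inst_tail _ _ ha2); apply/(heq phi hphiN) => //.
by rewrite size_cat ha1 hb.
Qed.

Lemma exists_formula_deciding : exists psi, q psi /\
  forall a', size a' = m -> satT psi a' -> forall b, size b = k -> tuple_in M b ->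
    (satT phi (a' ++ b) <-> satT phi (a ++ b)).
Proof.
apply: NNPP => hno; apply: no_finsat_undecided.
pose Th th := exists psi, q psi /\ th = undecided m psi phi.
have [b [hb [hfs hTh]]] : exists b, size b = k /\ finsat_in M N b /\ forall th, Th th -> satT th b.
  apply: (realize_finsat_in hN hNLam hCsat).
  - move=> _ [psi [/q_spec [hp [hbd _]] ->]].
    have hbd' : bounded (m + k) psi := bounded_mono (leq_addr k m) hbd.
    by do 2 split; (apply: params_in_fexn || apply: bounded_fexn).
  - by exists (undecided m (ftrue L C) phi), (ftrue L C); split=> //; exact: q_ftrue.
  - move=> _ _ [psi1 [h1 ->]] [psi2 [h2 ->]].
    have [_ [hb1 _]] := (q_spec _).1 h1; have [_ [hb2 _]] := (q_spec _).1 h2.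
    exists (undecided m (fand psi1 psi2) phi); split.
      by exists (fand psi1 psi2); split=> //; exact: q_fand.
    by move=> s _ _; apply: satT_undecided_fand.
  - move=> _ [psi [hpsi ->]]; have [_ [hbd hpsia]] := (q_spec psi).1 hpsi.
    apply: NNPP => hn; apply: hno; exists psi; split=> // a' ha' hpsia' b hb hbM.
    apply: NNPP => hne; apply: hn; exists b; split=> //; split=> //.
    exact: (satT_undecided_disagree hbd ha' ha).
by exists b; split=> //; split=> // psi hpsi; apply: hTh; exists psi.
Qed.

End Main.

Theorem claim1p11
  (L : signature) (C : structure L)
  (hdep : dependent C)
  (* kappa = |K| *)
  (K : Type) (hreg : regular K) (hT : card_lt (card_T L) K)
  (* C is a monster model over N *)
  (N : C -> Prop) (hN : elem_sub N (fun _ : C => True))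
  (hmon : exists Lam : Type, set_card_lt N Lam /\ saturated_in (fun _ : C => True) Lam)
  (hsat : saturated_in N K)
  (m : nat) (q : formula L C -> Prop) (hq : S_nsp_ge N K m q) :
  forall M : C -> Prop, elem_sub M N -> set_card_lt M K ->
  forall (k : nat) (phi : formula L C), params_in N phi -> bounded (m + k) phi ->
  exists (psi : formula L C) (eta : seq C -> bool),
    q psi /\
    (* psi(x,d) |- { phi(x,b)^{eta(b)} : b \in M^k } *)
    (forall a : seq C, size a = m -> satT psi a ->
       forall b : seq C, size b = k -> tuple_in M b ->
         (satT phi (a ++ b) <-> eta b)) /\
    (forall b : seq C, size b = k -> tuple_in M b ->
       q (if eta b then inst_tail m b phi else fneg (inst_tail m b phi))).
Proof.
move=> M [hMN _] hMK k phi hphiN hphib.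
have [[a [ha hqa]] horth] := hq; have [Lam [hNLam hCsat]] := hmon.
have [psi [hpsi hdec]] :=
  exists_formula_deciding hN.2 hNLam hCsat ha hqa horth hMN hMK hphiN hphib.
pose eta b := if excluded_middle_informative (satT phi (a ++ b)) then true else false.
have etaE b : eta b <-> satT phi (a ++ b).
  by rewrite /eta; case: excluded_middle_informative.
exists psi, eta; split=> //; split.
- by move=> a' ha' hpsia' b hb hbM; rewrite etaE; exact: hdec.
- move=> b hb hbM; apply: (q_literal ha hqa hphiN hphib hb _ (etaE b)).
  by move=> i /hbM /hMN.
Qed.
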